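(* For $i\in\{1,\dots,m\}$ let $q_i(y)=y^\top A_iy+2b_i^\top y+c_i$ with $A_i\in\mathbb{S}^{n-1}$, $b_i\in\mathbb{R}^{n-1}$, $c_i\in\mathbb{R}$, let $M_i=\begin{pmatrix}c_i & b_i^\top\\ b_i & A_i\end{pmatrix}\in\mathbb{S}^n$, $\mathcal{M}=\{M_1,\dots,M_m\}$, and $\mathcal{Y}=\{y\in\mathbb{R}^{n-1}: q_i(y)\ge 0\ \forall i\in\{1,\dots,m\}\}$. Suppose there exists $\lambda^*\in\mathbb{R}^m_+$ such that $\sum_{i=1}^m\lambda^*_iA_i$ is negative definite. If $\mathcal{S}(\mathcal{M})$ is rank-one generated, then $$\mathrm{conv}(\mathcal{Y})=\left\{y\in\mathbb{R}^{n-1}:\ \exists\, Y\in\mathbb{S}^{n-1},\ Y\succeq yy^\top,\ \langle A_i,Y\rangle+2\langle b_i,y\rangle+c_i\ge 0\ \forall i\in\{1,\dots,m\}\right\};$$ in particular $\mathrm{conv}(\mathcal{Y})$ is semidefinite-representable.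
   Context: $\mathbb{S}^n$ denotes real symmetric $n\times n$ matrices with $\langle A,B\rangle=\mathrm{tr}(AB)$, $\mathbb{S}^n_+$ the PSD cone, and $Y\succeq Z$ means $Y-Z$ is PSD. For $\mathcal{M}\subseteq\mathbb{S}^n$, $\mathcal{S}(\mathcal{M})=\{X\in\mathbb{S}^n_+:\langle M,X\rangle\ge0\ \forall M\in\mathcal{M}\}$. A closed convex cone $\mathcal{S}\subseteq\mathbb{S}^n_+$ is rank-one generated (ROG) if $\mathcal{S}=\mathrm{conv}(\mathcal{S}\cap\{xx^\top:x\in\mathbb{R}^n\})$. *)

From HB Require Import structures.
From mathcomp Require Import all_boot all_order all_algebra.
From mathcomp Require Import reals.
Set Implicit Arguments. Unset Strict Implicit. Unset Printing Implicit Defensive.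
Import Order.TTheory GRing.Theory Num.Theory.
Local Open Scope ring_scope.

Definition symmat (R : realType) (n : nat) (X : 'M[R]_n) : Prop := X^T = X.

Definition psd (R : realType) (n : nat) (X : 'M[R]_n) : Prop :=
  symmat X /\ forall x : 'cV[R]_n, 0 <= (x^T *m X *m x) 0 0.

Definition inner (R : realType) (n : nat) (A B : 'M[R]_n) : R := \tr (A *m B).

Definition SM (R : realType) (n m : nat) (Ms : 'I_m -> 'M[R]_n) (X : 'M[R]_n) : Prop :=
  psd X /\ forall i, 0 <= inner (Ms i) X.

Definition conv (R : realType) (V : lmodType R) (P : V -> Prop) (v : V) : Prop :=
  exists (k : nat) (w : 'I_k -> R) (p : 'I_k -> V),
    (forall j, 0 <= w j) /\ \sum_j w j = 1 /\ (forall j, P (p j)) /\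
    v = \sum_j w j *: p j.

Definition rank_one_psd (R : realType) (n : nat) (X : 'M[R]_n) : Prop :=
  exists x : 'cV[R]_n, X = x *m x^T.

Definition ROG (R : realType) (n : nat) (S : 'M[R]_n -> Prop) : Prop :=
  forall X, S X <-> conv (fun Z => S Z /\ rank_one_psd Z) X.

Definition homog (R : realType) (n : nat) (A : 'M[R]_n) (b : 'cV[R]_n) (c : R)
  : 'M[R]_(1 + n) := block_mx c%:M b^T b A.

Definition quad (R : realType) (n : nat) (A : 'M[R]_n) (b : 'cV[R]_n) (c : R)
  (y : 'cV[R]_n) : R := (y^T *m A *m y) 0 0 + 2 * (b^T *m y) 0 0 + c.

From HB Require Import structures.
From mathcomp Require Import all_boot all_order all_algebra.
From mathcomp Require Import reals.
From mathcomp Require Import ring lra.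
Import Order.TTheory GRing.Theory Num.Theory.
Local Open Scope ring_scope.

(* A convex combination y = sum_j w_j p_j of feasible points comes with the
   moment matrix Y := sum_j w_j p_j p_j^T: Y - y y^T is PSD by Jensen's
   inequality for the square, and the lifted constraints hold by linearity.
   Conversely, if Y - y y^T is PSD then [[1, y^T], [y, Y]] lies in S(M), so by
   rank-one generation it is a nonnegative combination of matrices x_j x_j^T
   in S(M), with x_j = (t_j, z_j).  Comparing entries gives
   sum_j w_j t_j^2 = 1 and y = sum_j w_j t_j z_j, and for t_j <> 0 the point
   z_j / t_j is feasible by homogeneity; hence y is a convex combination of
   these points with weights w_j t_j^2. *)

Section ShorRelaxation.
Context {R : realType}.

Lemma conv_dehomogenize {V : lmodType R} (P : V -> Prop) (k : nat)
    (w t : 'I_k -> R) (z : 'I_k -> V) :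
  (forall j, 0 <= w j) -> \sum_j w j * t j ^+ 2 = 1 ->
  (forall j, t j != 0 -> P ((t j)^-1 *: z j)) ->
  conv P (\sum_j (w j * t j) *: z j).
Proof.
move=> w_ge0 wt2_sum1 Pz.
have [j0 tj0_neq0] : exists j0, t j0 != 0.
  case: (pickP (fun j => t j != 0)) => [j0 tj0 | t_eq0]; first by exists j0.
  move/eqP: wt2_sum1; rewrite big1 ?(eq_sym 0) ?oner_eq0// => j _.
  by move/negbFE/eqP: (t_eq0 j) => ->; rewrite expr0n mulr0.
pose p j := if t j != 0 then (t j)^-1 *: z j else (t j0)^-1 *: z j0.
exists k, (fun j => w j * t j ^+ 2), p.
split=> [j|]; first by rewrite mulr_ge0 ?sqr_ge0.
split; first exact: wt2_sum1.
split=> [j|].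
  by rewrite /p; case: ifP => [/Pz|_]; last exact: Pz.
apply: eq_bigr => j _; rewrite /p; case: (eqVneq (t j) 0) => [->|tj_neq0].
  by rewrite mulr0 expr0n mulr0 !scale0r.
by rewrite scalerA; congr (_ *: _); field.
Qed.

Lemma sqr_convex_comb_le (k : nat) (w a : 'I_k -> R) :
  (forall j, 0 <= w j) -> \sum_j w j = 1 ->
  (\sum_j w j * a j) ^+ 2 <= \sum_j w j * a j ^+ 2.
Proof.
move=> w_ge0 w_sum1.
have expand mu : \sum_j w j * (a j - mu) ^+ 2 =
    \sum_j w j * a j ^+ 2 - 2 * mu * \sum_j w j * a j + mu ^+ 2 * \sum_j w j.
  by rewrite !mulr_sumr -sumrB -big_split /=; apply: eq_bigr => j _; ring.
have := expand (\sum_j w j * a j); rewrite w_sum1.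
set mu := \sum_j w j * a j => variance_eq.
have : 0 <= \sum_j w j * (a j - mu) ^+ 2.
  by apply: sumr_ge0 => j _; rewrite mulr_ge0 ?sqr_ge0.
rewrite variance_eq; lra.
Qed.

Definition qform {n : nat} (M : 'M[R]_n) (x : 'cV[R]_n) : R :=
  (x^T *m M *m x) 0 0.

Lemma dotC {n : nat} (u v : 'cV[R]_n) : u^T *m v = v^T *m u.
Proof.
apply/matrixP => i j; rewrite !ord1 !mxE.
by apply: eq_bigr => k _; rewrite !mxE mulrC.
Qed.

Lemma dot_sumr {n k : nat} (u : 'cV[R]_n) (w : 'I_k -> R)
    (p : 'I_k -> 'cV[R]_n) :
  (u^T *m \sum_j w j *: p j) 0 0 = \sum_j w j * (u^T *m p j) 0 0.
Proof.
by rewrite mulmx_sumr summxE; apply: eq_bigr => j _; rewrite -scalemxAr mxE.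
Qed.

Lemma qformB {n : nat} (M N : 'M[R]_n) x :
  qform (M - N) x = qform M x - qform N x.
Proof. by rewrite /qform mulmxBr mulmxBl !mxE. Qed.

Lemma qform_sum {n k : nat} (w : 'I_k -> R) (M : 'I_k -> 'M[R]_n) x :
  qform (\sum_j w j *: M j) x = \sum_j w j * qform (M j) x.
Proof.
rewrite /qform mulmx_sumr mulmx_suml summxE; apply: eq_bigr => j _.
by rewrite -scalemxAr -scalemxAl mxE.
Qed.

Lemma qformZ {n : nat} (M : 'M[R]_n) a x :
  qform M (a *: x) = a ^+ 2 * qform M x.
Proof.
rewrite /qform [(a *: x)^T]linearZ /= -!scalemxAl -scalemxAr.
by rewrite !mxE mulrA expr2.
Qed.

Lemma qform_outer {n : nat} (x v : 'cV[R]_n) :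
  qform (x *m x^T) v = (v^T *m x) 0 0 ^+ 2.
Proof.
by rewrite /qform !mulmxA -mulmxA [in LHS]mxE big_ord1 (dotC x v) expr2.
Qed.

Lemma inner_outer {n : nat} (M : 'M[R]_n) x : inner M (x *m x^T) = qform M x.
Proof. by rewrite /inner /qform mulmxA mxtrace_mulC mulmxA trace_mx11. Qed.

Lemma inner_sumr {n k : nat} (M : 'M[R]_n) (w : 'I_k -> R)
    (N : 'I_k -> 'M[R]_n) :
  inner M (\sum_j w j *: N j) = \sum_j w j * inner M (N j).
Proof.
rewrite /inner mulmx_sumr raddf_sum; apply: eq_bigr => j _.
by rewrite /= -scalemxAr mxtraceZ.
Qed.

Lemma qform_homog {n : nat} (A : 'M[R]_n) (b : 'cV[R]_n) (c : R)
    (t : 'cV[R]_1) z :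
  qform (homog A b c) (col_mx t z) =
  t 0 0 ^+ 2 * c + 2 * t 0 0 * (b^T *m z) 0 0 + qform A z.
Proof.
rewrite /qform /homog tr_col_mx mul_row_block mul_row_col.
rewrite [t]mx11_scalar tr_scalar_mx !mul_scalar_mx !mulmxDl.
by rewrite -!scalemxAl !mul_mx_scalar (dotC z b) !mxE /=; ring.
Qed.

Lemma qform_homog_quad {n : nat} (A : 'M[R]_n) (b : 'cV[R]_n) (c : R)
    (t : 'cV[R]_1) z :
  t 0 0 != 0 ->
  qform (homog A b c) (col_mx t z) = t 0 0 ^+ 2 * quad A b c ((t 0 0)^-1 *: z).
Proof.
move=> t_neq0; rewrite qform_homog /quad -/(qform A _) qformZ.
by rewrite -scalemxAr [in RHS]mxE; field.
Qed.

Lemma inner_homog {n : nat} (A Y : 'M[R]_n) (b y : 'cV[R]_n) (c : R) :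
  inner (homog A b c) (homog Y y 1) = inner A Y + 2 * (b^T *m y) 0 0 + c.
Proof.
rewrite /inner /homog mulmx_block mxtrace_block !mxtraceD !trace_mx11.
by rewrite mulmx1 mxE (mxtrace_mulC b) trace_mx11 (dotC y b) /=; ring.
Qed.

Lemma homog_psd {n : nat} (Y : 'M[R]_n) (y : 'cV[R]_n) :
  symmat Y -> psd (Y - y *m y^T) -> psd (homog Y y 1).
Proof.
move=> Y_sym [_ Yy_psd]; split.
  by rewrite /symmat /homog tr_block_mx trmxK tr_scalar_mx Y_sym.
move=> v; rewrite -(vsubmxK v) -/(qform _ _) qform_homog.
have := Yy_psd (dsubmx v); rewrite -/(qform _ _) qformB qform_outer dotC.
set s := (_ *m _) 0 0; set u := _ 0 0; have := sqr_ge0 (u + s); nra.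
Qed.

Lemma symmat_outer_comb {n k : nat} (w : 'I_k -> R) (p : 'I_k -> 'cV[R]_n) :
  symmat (\sum_j w j *: (p j *m (p j)^T)).
Proof.
rewrite /symmat linear_sum; apply: eq_bigr => j _.
by rewrite linearZ /= trmx_mul trmxK.
Qed.

Lemma moment_psd {n k : nat} (w : 'I_k -> R) (p : 'I_k -> 'cV[R]_n) :
  (forall j, 0 <= w j) -> \sum_j w j = 1 ->
  psd (\sum_j w j *: (p j *m (p j)^T) -
       (\sum_j w j *: p j) *m (\sum_j w j *: p j)^T).
Proof.
move=> w_ge0 w_sum1; split.
  by rewrite /symmat linearB /= (symmat_outer_comb w p) trmx_mul trmxK.
move=> v; rewrite -/(qform _ v) qformB qform_outer qform_sum dot_sumr subr_ge0.
under [X in _ <= X]eq_bigr => j _ do rewrite qform_outer.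
exact: sqr_convex_comb_le.
Qed.

Lemma homog_outer_comb {n k : nat} {w : 'I_k -> R}
    {x : 'I_k -> 'cV[R]_(1 + n)} {Y : 'M[R]_n} {y : 'cV[R]_n} :
  homog Y y 1 = \sum_j w j *: (x j *m (x j)^T) ->
  \sum_j w j * usubmx (x j) 0 0 ^+ 2 = 1 /\
  y = \sum_j (w j * usubmx (x j) 0 0) *: dsubmx (x j).
Proof.
move=> lift_eq.
have entry a a' : homog Y y 1 a a' = \sum_j w j * (x j a 0 * x j a' 0).
  by rewrite lift_eq summxE; apply: eq_bigr => j _; rewrite !mxE big_ord1 !mxE.
split.
  have := entry (lshift n 0) (lshift n 0).
  rewrite /homog block_mxEul mxE /= mulr1n => ->.
  by apply: eq_bigr => j _; rewrite !mxE expr2.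
apply/matrixP => a a'; rewrite ord1 summxE.
have := entry (rshift 1 a) (lshift n 0); rewrite /homog block_mxEdl => ->.
by apply: eq_bigr => j _; rewrite !mxE mulrA mulrAC.
Qed.

Lemma ROG_outer_decomposition {n : nat} {S : 'M[R]_n -> Prop} {X : 'M[R]_n} :
  ROG S -> S X ->
  exists k (w : 'I_k -> R) (x : 'I_k -> 'cV[R]_n),
    [/\ forall j, 0 <= w j, forall j, S (x j *m (x j)^T) &
        X = \sum_j w j *: (x j *m (x j)^T)].
Proof.
move=> rog /rog [k [w [p [w_ge0 [_ [Sp ->]]]]]].
have [x p_outer] : exists x : 'I_k -> 'cV[R]_n, forall j, p j = x j *m (x j)^T.
  apply: (@fin_all_exists _ (fun=> 'cV[R]_n) (fun j xj => p j = xj *m xj^T)).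
  by move=> j; have [_ [xj ->]] := Sp j; exists xj.
exists k, w, x; split=> // [j|]; first by rewrite -p_outer; exact: (Sp j).1.
by apply: eq_bigr => j _; rewrite p_outer.
Qed.

Context {n m : nat}.
Variables (A : 'I_m -> 'M[R]_n) (b : 'I_m -> 'cV[R]_n) (c : 'I_m -> R).

Definition feasible (z : 'cV[R]_n) : Prop :=
  forall i, 0 <= quad (A i) (b i) (c i) z.

Definition shor_feasible (y : 'cV[R]_n) (Y : 'M[R]_n) : Prop :=
  [/\ symmat Y, psd (Y - y *m y^T) &
      forall i, 0 <= inner (A i) Y + 2 * ((b i)^T *m y) 0 0 + c i].

Lemma conv_feasible_shor y : conv feasible y -> exists Y, shor_feasible y Y.
Proof.
case=> k [w [p [w_ge0 [w_sum1 [p_feas ->]]]]].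
exists (\sum_j w j *: (p j *m (p j)^T)); split.
- exact: symmat_outer_comb.
- exact: moment_psd.
move=> i; rewrite inner_sumr dot_sumr.
have -> : c i = \sum_j w j * c i by rewrite -mulr_suml w_sum1 mul1r.
rewrite mulr_sumr -!big_split /=; apply: sumr_ge0 => j _.
have := mulr_ge0 (w_ge0 j) (p_feas j i).
rewrite inner_outer /quad -/(qform _ _); lra.
Qed.

Lemma shor_feasible_conv {y Y} :
  ROG (SM (fun i => homog (A i) (b i) (c i))) -> shor_feasible y Y ->
  conv feasible y.
Proof.
move=> rog [Y_sym Yy_psd Y_feas].
have S_lift : SM (fun i => homog (A i) (b i) (c i)) (homog Y y 1).
  by split=> [|i]; [exact: homog_psd | rewrite inner_homog].
have [k [w [x [w_ge0 Sx lift_eq]]]] := ROG_outer_decomposition rog S_lift.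
have [wt2_sum1 ->] := homog_outer_comb lift_eq.
apply: conv_dehomogenize => // j t_neq0 i.
have := (Sx j).2 i; rewrite inner_outer -[in qform _ _](vsubmxK (x j)).
by rewrite qform_homog_quad // pmulr_rge0 // exprn_even_gt0 //= t_neq0.
Qed.

End ShorRelaxation.

Theorem proposition5p9 (R : realType) (n m : nat)
  (A : 'I_m -> 'M[R]_n) (b : 'I_m -> 'cV[R]_n) (c : 'I_m -> R)
  (hA : forall i, symmat (A i))
  (lam : 'I_m -> R) (hlam0 : forall i, 0 <= lam i)
  (hlamND : forall x : 'cV[R]_n, x != 0 ->
      (x^T *m (\sum_i lam i *: A i) *m x) 0 0 < 0)
  (hROG : ROG (SM (fun i => homog (A i) (b i) (c i)))) :
  forall y : 'cV[R]_n,
    conv (fun z : 'cV[R]_n => forall i, 0 <= quad (A i) (b i) (c i) z) y <->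
    exists Y : 'M[R]_n, symmat Y /\ psd (Y - y *m y^T) /\
      forall i, 0 <= inner (A i) Y + 2 * ((b i)^T *m y) 0 0 + c i.
Proof.
move=> y; split.
  by case/conv_feasible_shor => Y [Y_sym Yy_psd Y_feas]; exists Y.
case=> Y [Y_sym [Yy_psd Y_feas]].
exact: (shor_feasible_conv A b c hROG (And3 Y_sym Yy_psd Y_feas)).
Qed.
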